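(* For every $n\ge1$ there is a bijection $\sigma\mapsto\sigma'$ from $\mathcal{W}^*_{2n+1}$ onto $\mathcal{C}_{2n+3}$ such that $\mathrm{drop}(\sigma')=\mathrm{des}(\sigma)+1$.
   Context: For $\sigma\in\mathfrak{S}_m$ (permutations of $[m]$), a descent is an index $i$ with $\sigma_i>\sigma_{i+1}$, with descent pair $(\sigma_i,\sigma_{i+1})$; $\mathrm{des}(\sigma)$ is the number of descents. $\mathcal{W}^*_{2n+1}$ is the set of permutations of $[2n+1]$ whose every descent pair consists of two odd entries and whose last entry is odd. A drop of $\sigma$ is a pair $(i,\sigma(i))$ with $i>\sigma(i)$; $\mathrm{drop}(\sigma)$ is the number of drops; a drop is odd-odd if both $i$ and $\sigma(i)$ are odd. $\mathcal{C}_m$ is the set of cyclic permutations of $[m]$ (consisting of a single $m$-cycle) all of whose drops are odd-odd. *)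

From mathcomp Require Import all_boot all_order all_fingroup.
Set Implicit Arguments. Unset Strict Implicit. Unset Printing Implicit Defensive.

(* Permutations of [m] = {1..m} are represented as s : {perm 'I_m}; the
   1-based entry sigma_i (i in 1..m) is (s (i-1)) + 1.  Hence a 1-based
   value/position x+1 is odd iff the 0-based x is even. *)

Definition odd1 (x : nat) : bool := ~~ odd x.  (* x+1 is odd *)

(* Descent positions (0-based i with i+1 < m) : sigma_{i+1} > sigma_{i+2}. *)
Definition is_descent (m : nat) (s : {perm 'I_m}) (i : nat) : bool :=
  match insub i, insub i.+1 with
  | Some a, Some b => (s b < s a)%N
  | _, _ => false
  end.

Definition des (m : nat) (s : {perm 'I_m}) : nat :=
  count (is_descent s) (iota 0 m.-1).

Definition Wstar (m : nat) : {set {perm 'I_m}} :=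
  [set s : {perm 'I_m} |
    [forall a : 'I_m, forall b : 'I_m,
       ((val b == (val a).+1) && (s b < s a)%N) ==> (odd1 (s a) && odd1 (s b))]
    && [forall a : 'I_m, (val a == m.-1) ==> odd1 (s a)]].

Definition drop_count (m : nat) (s : {perm 'I_m}) : nat :=
  #|[set i : 'I_m | (s i < i)%N]|.

Definition Ccyc (m : nat) : {set {perm 'I_m}} :=
  [set s : {perm 'I_m} |
    (#|porbits s| == 1%N)
    && [forall i : 'I_m, (s i < i)%N ==> (odd1 i && odd1 (s i))]].

From mathcomp Require Import all_boot all_order all_fingroup zify.
Set Implicit Arguments. Unset Strict Implicit. Unset Printing Implicit Defensive.

(* We work with 0-based permutations s of 'I_m, m = p.+1, and M = p.+3, so
   that the statement is the case p = 2n; the construction works for all p.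

   The bijection sends s in W*_m to the cyclic permutation
        (0 1 s(0)+2 s(1)+2 ... s(p)+2)           (1-based: (1 2 σ1+2 ... σm+2)).  Along this cycle the steps 0 -> 1 -> s(0)+2 never drop, the
   step s(k)+2 -> s(k+1)+2 drops iff k is a descent of s, and the closing
   step s(p)+2 -> 0 always drops: hence drop = des + 1, and the drops are
   odd-odd exactly because descent pairs and the last entry of s are odd.
   Conversely, a cycle t all of whose drops are odd-odd satisfies t(0) = 1,
   so reading its single orbit from 0 yields a word of the above form. *)

Lemma porbits1P (T : finType) (t : {perm T}) x0 :
  reflect (forall x, x \in porbit t x0) (#|porbits t| == 1).
Proof.
apply: (iffP idP) => [/cards1P [O hO] x | hall].
  have orbO y : porbit t y = O by apply/set1P; rewrite -hO; apply: imset_f.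
  by rewrite (orbO x0) -(orbO x) porbit_id.
apply/cards1P; exists (porbit t x0); apply/setP => O.
rewrite in_set1; apply/imsetP/eqP => [[x _ ->]|->]; last by exists x0.
by apply/eqP; rewrite eq_porbit_mem.
Qed.

Lemma odd1S2 x : odd1 x.+2 = odd1 x.
Proof. by rewrite /odd1 /= negbK. Qed.

Section CycleOfWord.
Variable p : nat.
Local Notation m := p.+1.
Local Notation M := p.+3.

Definition word_fun (s : {perm 'I_m}) (x : 'I_M) : 'I_M :=
  inord (if (x < 2)%N then nat_of_ord x else (s (inord (x - 2))).+2).

Lemma word_funE s x :
  (word_fun s x : nat) = if (x < 2)%N then nat_of_ord x else (s (inord (x - 2))).+2.
Proof.
rewrite /word_fun inordK //; case: ifP => _; first exact: ltn_ord.
by have := ltn_ord (s (inord (x - 2))); lia.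
Qed.

Lemma word_fun_inj s : injective (word_fun s).
Proof.
move=> x y /(congr1 (@nat_of_ord _)); rewrite !word_funE => exy; apply: ord_inj.
have := ltn_ord x; have := ltn_ord y.
case: ifP exy => x_lt2; case: ifP => y_lt2 exy hy hx; try lia.
have /perm_inj /(congr1 (@nat_of_ord _)) : s (inord (x - 2)) = s (inord (y - 2)).
  by apply: ord_inj; lia.
by rewrite !inordK; lia.
Qed.

Definition word s : {perm 'I_M} := perm (@word_fun_inj s).

Lemma word_lt2 s (j : 'I_M) : (j < 2)%N -> (word s j : nat) = j.
Proof. by rewrite permE word_funE => ->. Qed.

Lemma word_ge2 s (j : 'I_M) : (2 <= j)%N -> (word s j : nat) = (s (inord (j - 2))).+2.
Proof. by rewrite permE word_funE => j_ge2; rewrite ifF //; lia. Qed.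

Definition shift : {perm 'I_M} := perm (@ordS_inj M).

Lemma shiftE (j : 'I_M) : (shift j : nat) = (j.+1 %% M)%N.
Proof. by rewrite permE. Qed.

Lemma shift_lt (j : 'I_M) : (j.+1 < M)%N -> (shift j : nat) = j.+1.
Proof. by move=> lt_jM; rewrite shiftE modn_small. Qed.

Lemma shift_last (j : 'I_M) : nat_of_ord j = p.+2 -> shift j = ord0.
Proof. by move=> ej; apply: ord_inj; rewrite shiftE ej modnn. Qed.

Lemma shift_iter0 (j : 'I_M) : (shift ^+ j)%g ord0 = j.
Proof.
apply: ord_inj; case: j => j /= lt_jM.
elim: j lt_jM => [|j IH] lt_jM; first by rewrite expg0 perm1.
by rewrite expgSr permM shift_lt IH //; lia.
Qed.

Definition cycle_of s : {perm 'I_M} := (shift ^ word s)%g.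

Lemma cycle_of_word s x : cycle_of s (word s x) = word s (shift x).
Proof. by rewrite /cycle_of permJ. Qed.

Lemma cycle_of_iter0 s (j : 'I_M) : ((cycle_of s) ^+ j)%g ord0 = word s j.
Proof.
have -> : ord0 = word s ord0 by apply: ord_inj; rewrite word_lt2.
by rewrite /cycle_of -conjXg permJ shift_iter0.
Qed.

Lemma word_drop s (j : 'I_M) : (word s (shift j) < word s j) =
  (nat_of_ord j == p.+2)
  || [&& 2 <= j, j < p.+2 & s (inord (j.+1 - 2)) < s (inord (j - 2))].
Proof.
have := ltn_ord j; rewrite permE [word s j]permE !word_funE shiftE => lt_jM.
have [ej|nej] := eqVneq (nat_of_ord j) p.+2.
  by rewrite ej modnn /=; repeat case: ifP => ?; lia.
rewrite /= (modn_small (_ : j.+1 < M)); last lia.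
by case: ifP => ?; case: ifP => ?; apply/idP/idP; lia.
Qed.

Lemma is_descentE s k : (k < p)%N ->
  is_descent s k = (s (inord k.+1 : 'I_m) < s (inord k : 'I_m)).
Proof.
move=> lt_kp; rewrite /is_descent.
case: insubP => [a _ ea|]; last lia.
case: insubP => [b _ eb|]; last lia.
have -> : a = inord k by apply: ord_inj; rewrite inordK //; lia.
by have -> : b = inord k.+1 by apply: ord_inj; rewrite inordK //; lia.
Qed.

(* The drops of [cycle_of s]: one per descent of s, plus the closing step. *)
Lemma drop_count_cycle_of s : drop_count (cycle_of s) = (des s).+1.
Proof.
rewrite /drop_count -(card_preimset _ (@perm_inj _ (word s))).
have -> : word s @^-1: [set i | cycle_of s i < i] = [set j | word s (shift j) < word s j].
  by apply/setP=> j; rewrite !inE cycle_of_word.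
rewrite -sum1_card big_mkcond /=.
under eq_bigr => j _ do rewrite inE word_drop.
rewrite big_ord_recr big_ord_recl big_ord_recl /= eqxx addn1; congr _.+1.
rewrite /des -sum1_count big_mkcond /= (_ : iota 0 p = index_iota 0 p);
  last by rewrite /index_iota subn0.
rewrite big_mkord !add0n [RHS]big_mkcond; apply: eq_bigr => i _; have := ltn_ord i.
rewrite /bump !leq0n !add1n is_descentE // !subSS !subn0 /= => lt_ip.
by case: ifP => ?; case: ifP => ?; lia.
Qed.

Lemma cycle_of_in_Ccyc s : s \in Wstar m -> cycle_of s \in Ccyc M.
Proof.
rewrite !inE => /andP[/forallP desc_odd /forallP last_odd]; apply/andP; split.
  apply/(porbits1P _ ord0) => x; apply/porbitP.
  by exists ((word s)^-1%g x : nat); rewrite cycle_of_iter0 permKV.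
apply/forallP => i; apply/implyP.
rewrite -(permKV (word s) i); set j := ((word s)^-1)%g i; have := ltn_ord j.
rewrite cycle_of_word word_drop => lt_jM /orP[/eqP ej | /and3P[j_ge2 lt_j hdes]].
  rewrite shift_last // (@word_lt2 s ord0) // word_ge2 ?ej // odd1S2 andbT.
  by rewrite !subSS subn0; have /implyP := last_odd (inord p); apply; rewrite /= inordK.
rewrite word_ge2 // word_ge2 shift_lt //; try lia.
rewrite !odd1S2; have /forallP/(_ (inord (j.+1 - 2)))/implyP := desc_odd (inord (j - 2)).
by apply; rewrite hdes andbT /=; apply/eqP; rewrite !inordK; lia.
Qed.

(* s is recovered from the orbit of 0 under [cycle_of s]. *)
Lemma cycle_of_inj : injective cycle_of.
Proof.
move=> s1 s2 e; apply/permP => k; apply: ord_inj; have := ltn_ord k => lt_km.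
have := cycle_of_iter0 s1 (inord k.+2).
rewrite e cycle_of_iter0 => /(congr1 (@nat_of_ord _)).
rewrite !word_ge2 ?inordK //; try lia.
rewrite (_ : inord (k.+2 - 2) = k); first by case.
by apply: ord_inj; rewrite inordK //; lia.
Qed.

Section Inverse.
Variable t : {perm 'I_M}.
Hypothesis t_Ccyc : t \in Ccyc M.

Lemma t_orbit0 x : x \in porbit t ord0.
Proof. by move: t_Ccyc; rewrite inE => /andP[/porbits1P]. Qed.

Lemma t_drop_odd i : (t i < i)%N -> odd1 i && odd1 (t i).
Proof. by move: t_Ccyc; rewrite inE => /andP[_ /forallP /(_ i) /implyP]. Qed.

Lemma card_orbit0 : #|porbit t ord0| = M.
Proof.
rewrite (_ : porbit t ord0 = setT) ?cardsT ?card_ord //.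
by apply/setP => x; rewrite inE t_orbit0.
Qed.

Definition visit (j : 'I_M) : 'I_M := iter j t ord0.

Lemma visit_inj : injective visit.
Proof.
have uniq_tr := uniq_traject_porbit t ord0; rewrite card_orbit0 in uniq_tr.
move=> i j eij; apply: ord_inj; apply/eqP.
by rewrite -(nth_uniq ord0 _ _ uniq_tr) ?size_traject // !nth_traject // -/(visit i) eij.
Qed.

Lemma t_visit (j : 'I_M) : t (visit j) = visit (shift j).
Proof.
rewrite /visit -iterS; have := ltn_ord j => lt_jM.
have [ej|nej] := eqVneq (nat_of_ord j) p.+2.
  by rewrite shift_last // ej; have := iter_porbit t ord0; rewrite card_orbit0.
by rewrite shift_lt //; lia.
Qed.

(* The cycle goes from 0 to 1: the preimage of 1 cannot be 1 (t is a single
   M-cycle) nor >= 2 (that step would be a drop onto the even value 1+1). *)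
Lemma t_ord0 : (t ord0 : nat) = 1.
Proof.
set x := (t^-1)%g (inord 1); have tx : t x = inord 1 by rewrite permKV.
have [x0|nx0] := eqVneq (nat_of_ord x) 0.
  by rewrite (_ : ord0 = x) ?tx ?inordK //; apply: ord_inj.
have [x1|nx1] := eqVneq (nat_of_ord x) 1.
  have xE : x = inord 1 by apply: ord_inj; rewrite inordK.
  have := t_orbit0 x; rewrite porbit_sym => /porbitP [i].
  by rewrite permX_fix ?tx ?xE // => /(congr1 (@nat_of_ord _)); rewrite inordK.
have x_gt1 : (1 < x)%N by lia.
by have := @t_drop_odd x; rewrite tx inordK // => /(_ x_gt1) /andP[].
Qed.

Lemma visit_ge2 (j : 'I_M) : (2 <= j)%N -> (2 <= visit j)%N.
Proof.
move=> j_ge2; have := ltn_ord j => lt_jM.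
have ne0 : visit j != visit ord0.
  by apply/eqP => /visit_inj /(congr1 (@nat_of_ord _)) /=; lia.
have ne1 : visit j != visit (inord 1).
  by apply/eqP => /visit_inj /(congr1 (@nat_of_ord _)); rewrite inordK //=; lia.
rewrite /visit inordK //= in ne1.
have : nat_of_ord (visit j) != 0 by apply: contra ne0 => /eqP e; apply/eqP/ord_inj.
have : nat_of_ord (visit j) != 1 by apply: contra ne1 => /eqP e; apply/eqP/ord_inj; rewrite e t_ord0.
lia.
Qed.

Definition unword_fun (k : 'I_m) : 'I_m := inord (visit (inord k.+2) - 2).

Lemma unword_funE k : (unword_fun k).+2 = visit (inord k.+2).
Proof.
have := ltn_ord k => lt_km.
have ge2 : (2 <= visit (inord k.+2))%N by apply: visit_ge2; rewrite inordK //; lia.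
have := ltn_ord (visit (inord k.+2)) => ltM.
by rewrite /unword_fun inordK; lia.
Qed.

Lemma unword_fun_inj : injective unword_fun.
Proof.
move=> a b eab; have := unword_funE a; have := ltn_ord a; have := ltn_ord b.
rewrite eab unword_funE => lt_b lt_a /ord_inj /visit_inj /(congr1 (@nat_of_ord _)).
by rewrite !inordK; try lia; move=> [] /ord_inj.
Qed.

Definition unword : {perm 'I_m} := perm unword_fun_inj.

Lemma unwordE k : (unword k).+2 = visit (inord k.+2).
Proof. by rewrite permE unword_funE. Qed.

(* Since t(0) = 1 and all later points are >= 2, the orbit of 0 is exactly
   the word of [unword]. *)
Lemma word_unword x : word unword x = visit x.
Proof.
apply: ord_inj; have := ltn_ord x => lt_xM.
case: (ltnP x 2) => [x_lt2|x_ge2]; last first.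
  rewrite word_ge2 // unwordE; congr (nat_of_ord (visit _)).
  by apply: ord_inj; rewrite !inordK; lia.
rewrite word_lt2 //; case: x lt_xM x_lt2 => [[|[|x]] lt_xM] //= _.
by rewrite /visit /= t_ord0.
Qed.

Lemma cycle_of_unword : cycle_of unword = t.
Proof.
apply/permP => x; rewrite -(permKV (word unword) x) cycle_of_word.
by rewrite !word_unword t_visit.
Qed.

Lemma unword_in_Wstar : unword \in Wstar m.
Proof.
have visitS (a : 'I_m) : (a < p)%N -> t (visit (inord a.+2)) = visit (inord a.+3).
  by move=> lt_ap; rewrite t_visit; congr visit; apply: ord_inj; rewrite shift_lt !inordK; lia.
rewrite inE; apply/andP; split; apply/forallP => a.
  apply/forallP => b; apply/implyP => /andP[/eqP eb hlt].
  have := ltn_ord a; have := ltn_ord b; rewrite /= in eb => lt_b lt_a.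
  have := @t_drop_odd (visit (inord a.+2)).
  rewrite -(odd1S2 (unword a)) -(odd1S2 (unword b)) unwordE unwordE eb visitS; last lia.
  have eb2 : inord a.+3 = inord b.+2 :> 'I_M by rewrite eb.
  by apply; rewrite eb2 -!unwordE.
apply/implyP => /eqP /= ea; have := ltn_ord a => lt_a.
have last_pos : nat_of_ord (inord a.+2 : 'I_M) = p.+2 by rewrite inordK; lia.
have t_last : t (visit (inord a.+2)) = ord0 by rewrite t_visit shift_last.
have ge2 : (2 <= visit (inord a.+2))%N by apply: visit_ge2; rewrite last_pos.
have := @t_drop_odd (visit (inord a.+2)); rewrite t_last -(odd1S2 (unword a)) unwordE.
by case/(_ (leq_trans _ ge2))/andP.
Qed.

End Inverse.

Theorem Wstar_Ccyc_bijection :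
  exists f : {perm 'I_m} -> {perm 'I_M},
    [/\ {in Wstar m, forall s, f s \in Ccyc M},
        {in Wstar m &, injective f},
        (forall t, t \in Ccyc M -> exists2 s, s \in Wstar m & f s = t)
      & {in Wstar m, forall s, drop_count (f s) = (des s).+1}].
Proof.
exists cycle_of; split.
- exact: cycle_of_in_Ccyc.
- by move=> s1 s2 _ _; apply: cycle_of_inj.
- by move=> t t_Ccyc; exists (unword t_Ccyc); [apply: unword_in_Wstar | apply: cycle_of_unword].
- by move=> s _; apply: drop_count_cycle_of.
Qed.

End CycleOfWord.

Theorem mainTheorem10 (n : nat) : (1 <= n)%N ->
  exists f : {perm 'I_(2 * n + 1)} -> {perm 'I_(2 * n + 3)},
    [/\ {in Wstar (2 * n + 1), forall s, f s \in Ccyc (2 * n + 3)},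
        {in Wstar (2 * n + 1) &, injective f},
        (forall t, t \in Ccyc (2 * n + 3) ->
           exists2 s, s \in Wstar (2 * n + 1) & f s = t)
      & {in Wstar (2 * n + 1), forall s, drop_count (f s) = (des s).+1}].
Proof.
move=> _; rewrite (_ : 2 * n + 1 = (2 * n).+1)%N ?addn1 //.
by rewrite (_ : 2 * n + 3 = (2 * n).+3)%N ?addn3 //; exact: Wstar_Ccyc_bijection.
Qed.
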